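(* Let $G$ be a finitely generated group, $U$ a finite generating set of $G$, and $H\leqslant G$ with $[G:H]=d$. There exists a finite generating set $V$ of $H$ such that $|V|\geqslant\frac{1}{d}|U|$ and $V\subset B_U(2d!+1)$.
   Context: $B_U(r)$ denotes the closed ball of radius $r$ about the identity in $G$ for the word metric induced by $U$. *)

From HB Require Import structures.
From mathcomp Require Import all_boot.
Set Implicit Arguments. Unset Strict Implicit. Unset Printing Implicit Defensive.
Local Open Scope group_scope.

Section Words.
Variable G : groupType.

Definition word_in (S : seq G) (w : seq G) : bool :=
  all (fun x => (x \in S) || (x^-1 \in S)) w.

Definition word_val (w : seq G) : G := \prod_(x <- w) x.

Definition ball (S : seq G) (r : nat) (g : G) : Prop :=
  exists w : seq G, [/\ size w <= r, word_in S w & g = word_val w].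

Definition generates (S : seq G) (K : {pred G}) : Prop :=
  {subset S <= K} /\
  forall h, h \in K -> exists w : seq G, word_in S w /\ h = word_val w.

(* H has index d in G: there are d left coset representatives t_0..t_{d-1}
   such that every g lies in exactly one coset t_i H. *)
Definition has_index (H : {pred G}) (d : nat) : Prop :=
  exists t : d.-tuple G, forall g : G, exists! i : 'I_d, (tnth t i)^-1 * g \in H.

End Words.

From HB Require Import structures.
From mathcomp Require Import all_boot.
From mathcomp Require Import zify.

Set Implicit Arguments.
Unset Strict Implicit.
Unset Printing Implicit Defensive.
Local Open Scope group_scope.

(* Every left coset of H has a representative r_i given by a word of length
   < d in U: in a longer word two of the first d + 1 suffixes lie in the same
   coset, and the letters between them can be deleted; H itself is represented
   by the empty word.  Schreier's rewriting then writes every h in H as a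
   product of the elements r_j^-1 x r_i of H, where x is a letter and x r_i
   lies in the coset of r_j; these have length < 2d.  To make V large, note
   that by pigeonhole some coset contains at least |U|/d elements of U, and
   their quotients u0^-1 u are distinct elements of H of length 2. *)

Section Words.
Variable G : groupType.
Implicit Types (S w : seq G) (x : G).

Lemma word_val_nil : word_val [::] = 1 :> G.
Proof. by rewrite /word_val big_nil. Qed.

Lemma word_val_cons x w : word_val (x :: w) = x * word_val w.
Proof. by rewrite /word_val big_cons. Qed.

Lemma word_val_cat w1 w2 : word_val (w1 ++ w2) = word_val w1 * word_val w2.
Proof. by rewrite /word_val big_cat. Qed.

Definition word_inv w := rev [seq x^-1 | x <- w].

Lemma word_val_inv w : word_val (word_inv w) = (word_val w)^-1.
Proof. by rewrite /word_val /word_inv -map_rev big_map prodgV revK. Qed.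

Lemma word_in_inv S w : word_in S (word_inv w) = word_in S w.
Proof.
rewrite /word_in /word_inv all_rev all_map; apply: eq_all => x /=.
by rewrite invgK orbC.
Qed.

Lemma word_in_cat S w1 w2 : word_in S (w1 ++ w2) = word_in S w1 && word_in S w2.
Proof. exact: all_cat. Qed.

Lemma word_in_sub S1 S2 w : {subset S1 <= S2} -> word_in S1 w -> word_in S2 w.
Proof. by move=> S12; apply: sub_all => x /orP[/S12|/S12]->; rewrite ?orbT. Qed.

Lemma word_in_cut S w a b : word_in S w -> word_in S (take a w ++ drop b w).
Proof.
move=> /allP Sw; apply/allP => x.
by rewrite mem_cat => /orP[/mem_take|/mem_drop]; apply: Sw.
Qed.

Lemma mem_letters S x :
  (x \in S ++ [seq y^-1 | y <- S]) = (x \in S) || (x^-1 \in S).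
Proof. by rewrite mem_cat -[x in x \in map _ _]invgK (mem_map invg_inj). Qed.

Lemma ball_le S m n g : m <= n -> ball S m g -> ball S n g.
Proof.
by move=> mn [w [wm Sw ->]]; exists w; split; rewrite ?(leq_trans wm).
Qed.

End Words.

Lemma pigeonhole_count (T : eqType) (I : finType) (i0 : I) (f : T -> I) s :
  exists i, size s <= #|I| * count (fun u => f u == i) s.
Proof.
have sum_count : \sum_i count (fun u => f u == i) s = size s.
  elim: s => [|x s IH]; first by rewrite big1.
  rewrite /= big_split /= IH (bigD1 (f x)) //= eqxx big1 // => i /negbTE.
  by rewrite eq_sym => ->.
exists [arg max_(i > i0) count (fun u => f u == i) s].
case: arg_maxnP => // i _ max_i.
rewrite -{1}sum_count -sum_nat_const.
by apply: leq_sum => j _; apply: max_i.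
Qed.

Section Cosets.
Variables (G : groupType) (H : {pred G}) (d : nat) (t : d.-tuple G).
Hypothesis HC : group_closed H.
Hypothesis Ht : forall g : G, exists! i : 'I_d, (tnth t i)^-1 * g \in H.

Let H1 : 1 \in H := HC.1.
Let HV {x} : x \in H -> x^-1 \in H := @group_closedV _ _ HC x.
Let HM {x y} : x \in H -> y \in H -> x * y \in H := @group_closedM _ _ HC x y.

Lemma index_gt0 : 0 < d.
Proof. by have [i _] := Ht 1; apply: leq_ltn_trans (leq0n i) (ltn_ord i). Qed.

Definition coset_idx (g : G) : 'I_d :=
  odflt (Ordinal index_gt0) [pick i | (tnth t i)^-1 * g \in H].

Lemma coset_idxP g : (tnth t (coset_idx g))^-1 * g \in H.
Proof.
rewrite /coset_idx; case: pickP => [//| none].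
by have [i [+ _]] := Ht g; rewrite none.
Qed.

Lemma coset_idx_eq a b : (coset_idx a == coset_idx b) = (a^-1 * b \in H).
Proof.
have [i [_ uniq_i]] := Ht b.
apply/eqP/idP => [E | Hab].
  have := HM (HV (coset_idxP a)) (coset_idxP b).
  by rewrite E invgM invgK -mulgA mulVKg.
rewrite -(uniq_i _ (coset_idxP b)); apply/esym/uniq_i.
by rewrite -[b](mulVKg a) mulgA HM ?coset_idxP.
Qed.

Lemma coset_idx1 h : (coset_idx h == coset_idx 1) = (h \in H).
Proof. by rewrite eq_sym coset_idx_eq invg1 mul1g. Qed.

Lemma coset_idx_tnth i : coset_idx (tnth t i) = i.
Proof.
have [j [_ uniq_j]] := Ht (tnth t i).
by rewrite -(uniq_j _ (coset_idxP _)) -(uniq_j i) // mulVg.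
Qed.

Lemma coset_idxMl x a b :
  coset_idx a = coset_idx b -> coset_idx (x * a) = coset_idx (x * b).
Proof.
by move=> /eqP E; apply/eqP; move: E; rewrite !coset_idx_eq invgM -mulgA mulKg.
Qed.

Lemma coset_short_word S w : word_in S w ->
  exists2 w', word_in S w' &
    size w' < d /\ coset_idx (word_val w') = coset_idx (word_val w).
Proof.
have [n] := ubnP (size w); elim: n w => // n IH w; rewrite ltnS => wn Sw.
have [wd | dw] := ltnP (size w) d; first by exists w.
pose c (k : nat) := coset_idx (word_val (drop k w)).
suff [a [b [ab bd cab]]] : exists a b, [/\ a < b, b <= d & c a = c b].
  have size_cut : size (take a w ++ drop b w) < n.
    rewrite size_cat size_take_min size_drop; lia.
  have [w' Sw' [w'd Ew']] := IH _ size_cut (word_in_cut a b Sw).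
  exists w' => //; split=> //; rewrite Ew' -[in RHS](cat_take_drop a w).
  by rewrite !word_val_cat; apply: coset_idxMl.
pose f (k : 'I_d.+1) := c k.
have /injectivePn[k1 [k2 k12 fk12]] : ~~ injectiveb f.
  by apply/injectiveP => /leq_card; rewrite !card_ord ltnn.
have [lt12|lt21|eq12] := ltngtP k1 k2.
- by exists k1, k2; split; rewrite // -ltnS.
- by exists k2, k1; split; rewrite // -ltnS.
- by rewrite -val_eqE /= eq12 eqxx in k12.
Qed.

Lemma short_transversal U : generates U predT ->
  exists rw : 'I_d -> seq G,
    [/\ forall i, word_in U (rw i), forall i, size (rw i) < d,
        forall i, coset_idx (word_val (rw i)) = i & rw (coset_idx 1) = [::]].
Proof.
move=> [_ genU].
have rwP i : exists w, [/\ word_in U w, size w < d, coset_idx (word_val w) = i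
                          & i = coset_idx 1 -> w = [::]].
  have [->|ne1] := eqVneq i (coset_idx 1).
    by exists [::]; split; rewrite ?word_val_nil ?index_gt0.
  have [w [Uw ew]] := genU (tnth t i) isT.
  have [w' Uw' [w'd Ew']] := coset_short_word Uw.
  exists w'; split=> // [|i1]; first by rewrite Ew' -ew coset_idx_tnth.
  by rewrite i1 eqxx in ne1.
have [rw {}rwP] := fin_all_exists rwP.
exists rw; split=> [i|i|i|]; try by case: (rwP i).
by case: (rwP (coset_idx 1)) => _ _ _ ->.
Qed.

Section Schreier.
Variables (U : seq G) (rw : 'I_d -> seq G).
Hypothesis rw_in : forall i, word_in U (rw i).
Hypothesis rw_size : forall i, size (rw i) < d.
Hypothesis rw_idx : forall i, coset_idx (word_val (rw i)) = i.

Let rep i := word_val (rw i).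

Definition schreier_gen x i := (rep (coset_idx (x * rep i)))^-1 * (x * rep i).

Definition schreier_gens :=
  [seq schreier_gen x i | x <- U ++ [seq x^-1 | x <- U], i <- enum 'I_d].

Lemma schreier_gen_in x i : schreier_gen x i \in H.
Proof. by rewrite -coset_idx_eq rw_idx. Qed.

Lemma mem_schreier_gens x i :
  (x \in U) || (x^-1 \in U) -> schreier_gen x i \in schreier_gens.
Proof. by rewrite -mem_letters => Ux; apply: allpairs_f; rewrite ?mem_enum. Qed.

Lemma schreier_gens_ball v : v \in schreier_gens -> ball U (2 * d) v.
Proof.
case/allpairsP=> [[x i] [/= + _ ->]]; rewrite mem_letters => Ux.
exists (word_inv (rw (coset_idx (x * rep i))) ++ x :: rw i); split.
- rewrite size_cat /word_inv size_rev size_map /=.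
  have := rw_size i; have := rw_size (coset_idx (x * rep i)); lia.
- by rewrite word_in_cat word_in_inv /= Ux !rw_in.
- by rewrite word_val_cat word_val_inv word_val_cons.
Qed.

Lemma schreier_factor w i : word_in U w ->
  exists2 z, word_in schreier_gens z &
    word_val w * rep i = rep (coset_idx (word_val w * rep i)) * word_val z.
Proof.
elim: w => [_ | x w IH /= /andP[Ux /IH[z Vz E]]].
  by exists [::]; rewrite // word_val_nil mul1g /rep rw_idx mulg1.
set k := coset_idx (word_val w * rep i) in E.
exists (schreier_gen x k :: z); first by rewrite /= mem_schreier_gens.
have -> : coset_idx (word_val (x :: w) * rep i) = coset_idx (x * rep k).
  by rewrite word_val_cons -mulgA; apply: coset_idxMl; rewrite /rep rw_idx.
by rewrite !word_val_cons -mulgA E /schreier_gen !mulgA mulgV mul1g.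
Qed.

Lemma schreier_gens_generate :
  rw (coset_idx 1) = [::] -> generates U predT -> generates schreier_gens H.
Proof.
move=> rw1 [_ genU]; split.
  by move=> _ /allpairsP[[x i] [_ _ ->]]; apply: schreier_gen_in.
move=> h Hh; have [w [Uw eh]] := genU h isT.
have [z Vz] := schreier_factor (coset_idx 1) Uw.
rewrite /rep rw1 word_val_nil mulg1 -eh.
have /eqP-> : coset_idx h == coset_idx 1 by rewrite coset_idx1.
by rewrite rw1 word_val_nil mul1g; exists z.
Qed.

End Schreier.

Lemma many_short_elements U : uniq U ->
  exists P : seq G, [/\ uniq P, {subset P <= H}, size U <= d * size P
                     & forall v, v \in P -> ball U 2 v].
Proof.
move=> uU; have [i] := pigeonhole_count (Ordinal index_gt0) coset_idx U.
rewrite card_ord -size_filter.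
case Es: [seq u <- U | coset_idx u == i] => [|u0 s] sizeU.
  by exists [::]; split; rewrite // muln0.
have mem_s u : u \in u0 :: s -> u \in U /\ coset_idx u = i.
  by rewrite -Es mem_filter => /andP[/eqP].
have [Uu0 iu0] := mem_s u0 (mem_head _ _).
exists [seq u0^-1 * u | u <- u0 :: s]; split.
- by rewrite map_inj_uniq -?Es ?filter_uniq //; apply: mulgI.
- by move=> _ /mapP[u /mem_s[_ iu] ->]; rewrite -coset_idx_eq iu iu0.
- by rewrite size_map.
- move=> _ /mapP[u /mem_s[Uu _] ->]; exists [:: u0^-1; u]; split => //.
    by rewrite /word_in /= invgK Uu0 Uu orbT.
  by rewrite !word_val_cons word_val_nil mulg1.
Qed.

End Cosets.

Theorem proposition2p33 (G : groupType) (U : seq G) (H : {pred G}) (d : nat) :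
  uniq U -> generates U predT ->
  group_closed H -> has_index H d ->
  exists V : seq G,
    [/\ uniq V, generates V H,
        size U <= d * size V
      & forall v, v \in V -> ball U (2 * d`! + 1) v].
Proof.
move=> uU genU HC [t Ht].
have [rw [rw_in rw_size rw_idx rw1]] := short_transversal HC Ht genU.
have [P [uP PH sizeU P2]] := many_short_elements HC Ht uU.
have [genS_H genS] := schreier_gens_generate HC rw_idx rw1 genU.
exists (undup (schreier_gens Ht U rw ++ P)); split.
- exact: undup_uniq.
- split=> [v | h /genS[z [Sz ->]]].
    by rewrite mem_undup mem_cat => /orP[/genS_H|/PH].
  exists z; split=> //; apply: word_in_sub Sz => x.
  by rewrite mem_undup mem_cat => ->.
- rewrite (leq_trans sizeU) // leq_mul2l uniq_leq_size ?orbT // => v Pv.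
  by rewrite mem_undup mem_cat Pv orbT.
- move=> v; rewrite mem_undup mem_cat => /orP[Sv|Pv].
    apply: ball_le (schreier_gens_ball HC rw_in rw_size Sv).
    by have := fact_geq d; lia.
  by apply: ball_le (P2 v Pv); have := fact_gt0 d; lia.
Qed.
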